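(* Let $m\ge 2$ and let $B$ be a blocker in $CK(2m)$. Then there exist an integer $a$ and an integer $t$ with $2\le t\le m$ such that the set of boundary edges of $B$ is exactly $\{[a,a+1],[a+1,a+2],\dots,[a+t-1,a+t]\}$ (labels modulo $2m$); i.e., the boundary edges of $B$ form a path of length $t$ along the boundary of the polygon.
   Context: $CK(2m)$ denotes the complete convex geometric graph whose vertices are the $2m$ vertices of a convex polygon, labelled cyclically $0,1,\dots,2m-1$ (labels modulo $2m$), and whose edges are all straight segments between pairs of vertices. Two edges with four distinct endpoints cross iff their endpoints alternate in the cyclic order. A simple perfect matching (SPM) is a set of $m$ edges that are pairwise disjoint (no common endpoint and no crossing). A blocking set is a set of edges containing at least one edge of every SPM. A blocker is a blocking set with exactly $m$ edges. Boundary edges are the edges $[i,i+1]$. *)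

From mathcomp Require Import all_boot.
Set Implicit Arguments. Unset Strict Implicit. Unset Printing Implicit Defensive.

(* Vertices of CK(n) are 'I_n, labelled cyclically 0..n-1 (n = 2m).
   An edge is a 2-element set of vertices (a straight segment). *)
Definition is_edge n (e : {set 'I_n}) : bool := #|e| == 2.

(* Two edges with four distinct endpoints cross iff their endpoints
   alternate in the cyclic order; with linear labels 0..n-1 this means
   e = {a,b}, f = {c,d} with a < c < b < d (up to swapping e and f). *)
Definition alternate n (e f : {set 'I_n}) : bool :=
  [exists a : 'I_n, exists b : 'I_n, exists c : 'I_n, exists d : 'I_n,
     [&& e == [set a; b], f == [set c; d], a < c, c < b & b < d]].

Definition crossing n (e f : {set 'I_n}) : bool := alternate e f || alternate f e.

Definition edges_disjoint n (e f : {set 'I_n}) : bool :=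
  [disjoint e & f] && ~~ crossing e f.

Definition is_SPM m (M : {set {set 'I_(2 * m)}}) : bool :=
  [&& [forall e in M, is_edge e], #|M| == m &
      [forall e in M, forall f in M, (e != f) ==> edges_disjoint e f]].

Definition is_blocking_set m (B : {set {set 'I_(2 * m)}}) : Prop :=
  (forall e, e \in B -> is_edge e) /\
  (forall M, is_SPM M -> exists2 e, e \in B & e \in M).

Definition is_blocker m (B : {set {set 'I_(2 * m)}}) : Prop :=
  is_blocking_set B /\ #|B| = m.

Definition bedge n (i : 'I_n) : {set 'I_n} := [set i; ordS i].

Definition is_boundary n (e : {set 'I_n}) : bool := [exists i : 'I_n, e == bedge i].

Definition vshift n (a : 'I_n) (k : nat) : 'I_n := iter k (@ordS n) a.

From mathcomp Require Import all_boot zify.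
Set Implicit Arguments. Unset Strict Implicit. Unset Printing Implicit Defensive.

(* If a blocking set B of CK(2k+2) misses the
   boundary edge [u, u+1], then the edges of B avoiding u and u+1 block CK(2k): add
   [u, u+1] to an SPM of the smaller polygon. By induction every blocking set of CK(2k)
   has at least k edges, so in a blocker at most one edge meets u or u+1.
   The matching [0,1], [2,3], ... shows that a blocker B has boundary edges, and by
   counting not all of them, so some [i, i+1] in B is followed by [i+1, i+2] not in B.
   Deleting i+1 and i+2, together with [i, i+1], the only edge of B meeting them,
   leaves a blocker of CK(2m-2), whose boundary edges form a path by induction.
   Comparing the two sets of boundary edges, either those of B form a path ending with
   [i, i+1], or [i-1, i] is not in B and B has another run of at least two boundary
   edges; running the argument at the end of that run rules out the second case. *)

Definition strict_between (a b x : nat) := (a < x < b) || (b < x < a).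

(* Unlike [alternate], this form of crossing is invariant under rotating the labels. *)
Definition crossn (a b c d : nat) :=
  [&& a != c, a != d, b != c, b != d & strict_between a b c (+) strict_between a b d].

Lemma eq_ord n (i j : 'I_n) : (i == j) = (i == j :> nat).
Proof. by []. Qed.

Lemma alternate_set2 n (a b c d : 'I_n) : a < b -> c < d ->
  alternate [set a; b] [set c; d] = [&& a < c, c < b & b < d].
Proof.
move=> lt_ab lt_cd; apply/existsP/idP => [|alt]; last first.
  by exists a; apply/existsP; exists b; apply/existsP; exists c; apply/existsP; exists d;
    rewrite !eqxx.
case=> a' /existsP[b' /existsP[c' /existsP[d' /and5P[/eqP eab /eqP ecd ? ? ?]]]].
have /set2P[] : a' \in [set a; b] by rewrite eab !inE eqxx.
all: have /set2P[] : b' \in [set a; b] by rewrite eab !inE eqxx orbT.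
all: have /set2P[] : c' \in [set c; d] by rewrite ecd !inE eqxx.
all: have /set2P[] : d' \in [set c; d] by rewrite ecd !inE eqxx orbT.
all: by move=> *; subst; lia.
Qed.

Lemma crossing_set2 n (a b c d : 'I_n) : a != b -> c != d ->
  crossing [set a; b] [set c; d] = crossn a b c d.
Proof.
rewrite /crossing !eq_ord => ab cd.
case: (ltngtP a b) => [lt_ab|lt_ba|]; last by move/eqP; rewrite (negbTE ab).
all: case: (ltngtP c d) => [lt_cd|lt_dc|]; last by move/eqP; rewrite (negbTE cd).
- by rewrite !alternate_set2 // /crossn /strict_between; lia.
- by rewrite [[set c; d]]setUC !alternate_set2 // /crossn /strict_between; lia.
- by rewrite [[set a; b]]setUC !alternate_set2 // /crossn /strict_between; lia.
- by rewrite [[set a; b]]setUC [[set c; d]]setUC !alternate_set2 // /crossn /strict_between; lia.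
Qed.

Lemma val_ordS_lt n (i : 'I_n) : i.+1 < n -> (ordS i : nat) = i.+1.
Proof. exact: modn_small. Qed.

Lemma val_ordS_last n (i : 'I_n) : i.+1 = n -> (ordS i : nat) = 0.
Proof. by move=> h /=; rewrite h modnn. Qed.

Lemma val_ordS n (i : 'I_n) : (ordS i : nat) = if i.+1 == n then 0 else i.+1.
Proof.
by case: eqP => [/val_ordS_last|ne] //; apply: val_ordS_lt; have := ltn_ord i; lia.
Qed.

Lemma crossn_ordS n (a b c d : 'I_n) :
  crossn (ordS a) (ordS b) (ordS c) (ordS d) = crossn a b c d.
Proof.
rewrite !val_ordS /crossn /strict_between.
have := ltn_ord a; have := ltn_ord b; have := ltn_ord c; have := ltn_ord d.
by case: (a.+1 =P n); case: (b.+1 =P n); case: (c.+1 =P n); case: (d.+1 =P n); lia.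
Qed.

Lemma vshiftS n (a : 'I_n) s : vshift a s.+1 = ordS (vshift a s).
Proof. by []. Qed.

Lemma vshift_ordS n (a : 'I_n) s : vshift (ordS a) s = ordS (vshift a s).
Proof. by rewrite /vshift -iterSr. Qed.

Lemma vshiftD n (a : 'I_n) s t : vshift (vshift a t) s = vshift a (s + t).
Proof. by rewrite /vshift iterD. Qed.

Lemma val_vshift n (a : 'I_n) s : (vshift a s : nat) = (a + s) %% n.
Proof.
elim: s => [|s IHs]; first by rewrite addn0 modn_small.
by rewrite vshiftS /= IHs -addn1 modnDml addn1 addnS.
Qed.

Lemma vshiftK n s : cancel (@vshift n ^~ s) (@vshift n ^~ (s * n - s)).
Proof.
move=> a; apply: val_inj; rewrite /= vshiftD val_vshift subnK; last first.
  by rewrite leq_pmulr //; apply: leq_ltn_trans (ltn_ord a).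
by rewrite addnC modnMDl modn_small.
Qed.

Lemma vshiftKV n s : cancel (@vshift n ^~ (s * n - s)) (@vshift n ^~ s).
Proof. by move=> a; rewrite vshiftD addnC -vshiftD vshiftK. Qed.

Lemma vshift_inj n s : injective (@vshift n ^~ s).
Proof. exact: can_inj (vshiftK s). Qed.

Lemma vshift_onto n (a b : 'I_n) : exists s, vshift a s = b.
Proof.
exists (b + n - a); apply: val_inj; rewrite /= val_vshift addnBA; last first.
  by rewrite ltnW // ltn_addl.
by rewrite addKn modnDr modn_small.
Qed.

Lemma vshift_ord_pred n (a : 'I_n) s : vshift (ord_pred a) s = ord_pred (vshift a s).
Proof. by apply: ordS_inj; rewrite -vshift_ordS !ord_predK. Qed.

Lemma crossn_vshift n s (a b c d : 'I_n) :
  crossn (vshift a s) (vshift b s) (vshift c s) (vshift d s) = crossn a b c d.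
Proof. by elim: s => [|s IHs] //; rewrite !vshiftS crossn_ordS. Qed.

Lemma bedge_vshift n s (i : 'I_n) : @vshift n ^~ s @: bedge i = bedge (vshift i s).
Proof. by rewrite /bedge imsetU1 imset_set1 vshift_ordS. Qed.

Definition edge_map n n' (f : 'I_n -> 'I_n') (E : {set {set 'I_n}}) : {set {set 'I_n'}} :=
  [set f @: e | e : {set 'I_n} in E].

Lemma edge_mapK n n' (f : 'I_n -> 'I_n') (g : 'I_n' -> 'I_n) :
  cancel f g -> cancel (edge_map f) (edge_map g).
Proof.
move=> fK E; rewrite /edge_map -imset_comp -[RHS]imset_id; apply: eq_imset => e /=.
by rewrite -imset_comp (eq_imset _ fK) imset_id.
Qed.

Section EdgeMap.

Variables (n n' : nat) (f : 'I_n -> 'I_n').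
Hypothesis f_inj : injective f.
Hypothesis crossn_f : forall a b c d, crossn (f a) (f b) (f c) (f d) = crossn a b c d.

Lemma is_edge_imset (e : {set 'I_n}) : is_edge (f @: e) = is_edge e.
Proof. by rewrite /is_edge card_imset. Qed.

Lemma edges_disjoint_imset (e e' : {set 'I_n}) : is_edge e -> is_edge e' ->
  edges_disjoint (f @: e) (f @: e') = edges_disjoint e e'.
Proof.
case/cards2P=> a [b [ab ->]]; case/cards2P=> c [d [cd ->]].
rewrite /edges_disjoint imset_disjoint // !imsetU1 !imset_set1.
by rewrite !crossing_set2 ?crossn_f ?(inj_eq f_inj).
Qed.

Lemma mem_edge_map (E : {set {set 'I_n}}) (e : {set 'I_n}) :
  (f @: e \in edge_map f E) = (e \in E).
Proof. by rewrite mem_imset //; apply: imset_inj. Qed.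

Lemma card_edge_map (E : {set {set 'I_n}}) : #|edge_map f E| = #|E|.
Proof. by rewrite card_imset //; apply: imset_inj. Qed.

End EdgeMap.

Lemma is_SPM_edge_map m (f : 'I_(2 * m) -> 'I_(2 * m)) : injective f ->
  (forall a b c d, crossn (f a) (f b) (f c) (f d) = crossn a b c d) ->
  forall M, is_SPM M -> is_SPM (edge_map f M).
Proof.
move=> f_inj crossn_f M /and3P[/forall_inP edgeM /eqP cardM /forall_inP disjM].
apply/and3P; split.
- by apply/forall_inP => _ /imsetP[e eM ->]; rewrite is_edge_imset ?edgeM.
- by rewrite card_edge_map ?cardM.
- apply/forall_inP => _ /imsetP[e eM ->]; apply/forall_inP => _ /imsetP[e' e'M ->].
  apply/implyP => neq; rewrite (edges_disjoint_imset f_inj crossn_f) ?edgeM //.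
  by move/forall_inP/(_ e' e'M)/implyP: (disjM e eM); apply; apply: contraNneq neq => ->.
Qed.

Section Rotation.

Variables (m s : nat).
Local Notation rot := (@vshift (2 * m) ^~ s).

Lemma blocking_set_rot B : is_blocking_set B -> is_blocking_set (edge_map rot B).
Proof.
case=> edgeB blockB; split.
  by move=> _ /imsetP[e eB ->]; rewrite is_edge_imset ?edgeB //; apply: vshift_inj.
move=> M SPM_M.
have SPM_M' : is_SPM (edge_map (@vshift _ ^~ (s * (2 * m) - s)) M).
  by apply: is_SPM_edge_map SPM_M; [apply: vshift_inj | apply: crossn_vshift].
case: (blockB _ SPM_M') => e eB eM'.
exists (rot @: e); first by rewrite mem_edge_map //; apply: vshift_inj.
by rewrite -[M](edge_mapK (vshiftKV s)) mem_edge_map //; apply: vshift_inj.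
Qed.

Lemma blocker_rot B : is_blocker B -> is_blocker (edge_map rot B).
Proof.
case=> blockB cardB; split; first exact: blocking_set_rot.
by rewrite card_edge_map //; apply: vshift_inj.
Qed.

End Rotation.

Definition bidx n (E : {set {set 'I_n}}) : {set 'I_n} := [set i | bedge i \in E].

Lemma bidx_edge_map_vshift n s (E : {set {set 'I_n}}) :
  bidx (edge_map (@vshift n ^~ s) E) = @vshift n ^~ s @: bidx E.
Proof.
apply/setP => j; rewrite -(vshiftKV s j) mem_imset; last exact: vshift_inj.
by rewrite !inE -bedge_vshift mem_edge_map //; apply: vshift_inj.
Qed.

Lemma mem_bidx_edge_map_vshift n s (E : {set {set 'I_n}}) x :
  (vshift x s \in bidx (edge_map (@vshift n ^~ s) E)) = (x \in bidx E).
Proof. by rewrite bidx_edge_map_vshift mem_imset //; apply: vshift_inj. Qed.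

Lemma boundary_edges_bidx n (E : {set {set 'I_n}}) :
  [set e in E | is_boundary e] = @bedge n @: bidx E.
Proof.
apply/setP => e; rewrite inE; apply/andP/imsetP.
  by case=> eE /existsP[i /eqP ei]; exists i; rewrite // inE -ei.
by case=> i iE ->; split; [rewrite inE in iE | apply/existsP; exists i].
Qed.

Lemma ordS_neq n (i : 'I_n) : 1 < n -> ordS i != i.
Proof. by rewrite eq_ord val_ordS; have := ltn_ord i; case: (i.+1 =P n); lia. Qed.

Lemma is_edge_bedge n (i : 'I_n) : 1 < n -> is_edge (bedge i).
Proof. by move=> n_gt1; rewrite /is_edge cards2 (eq_sym i) ordS_neq. Qed.

Lemma bedge_inj n : 2 < n -> injective (@bedge n).
Proof.
move=> n_gt2 i j eq_ij.
have /set2P[//|ji] : j \in bedge i by rewrite eq_ij !inE eqxx.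
have /set2P[//|ij] : i \in bedge j by rewrite -eq_ij !inE eqxx.
exfalso; have := congr1 (@nat_of_ord n) ij; rewrite ji !val_ordS; have := ltn_ord i.
by case: (i.+1 =P n) => [eq_i|]; rewrite ?eq_i; case: ifP; lia.
Qed.

Lemma card_bidx n (E : {set {set 'I_n}}) : 2 < n -> #|bidx E| <= #|E|.
Proof.
move=> n_gt2; rewrite -(card_imset _ (bedge_inj n_gt2)); apply: subset_leq_card.
by apply/subsetP => _ /imsetP[i iE ->]; rewrite inE in iE.
Qed.

Lemma edges_disjoint_set2 n (a b c d : 'I_n) : a != b -> c != d ->
  edges_disjoint [set a; b] [set c; d] =
  [&& a != c, a != d, b != c, b != d & ~~ crossn a b c d].
Proof.
move=> ab cd; rewrite /edges_disjoint crossing_set2 // disjoints_subset.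
by rewrite subUset !sub1set !inE !negb_or -!andbA.
Qed.

Lemma modn_lt_double n x : x < 2 * n -> x %% n = if x < n then x else x - n.
Proof.
move=> lt_x2n; case: ltnP => [|le_nx]; first exact: modn_small.
by rewrite -{1}(subnK le_nx) modnDr modn_small //; lia.
Qed.

Lemma val_ord_pred n (i : 'I_n) : 0 < i -> (ord_pred i : nat) = i.-1.
Proof.
move=> i_gt0; have lt_in := ltn_ord i.
by rewrite /= -!subn1 modn_lt_double; [case: ifP|]; lia.
Qed.

Lemma mem_vshift_range n (a i : 'I_n) t : t <= n ->
  (i \in [set vshift a j | j : 'I_t]) = (a <= i < a + t) || (i + n < a + t).
Proof.
move=> le_tn; have := ltn_ord a; have := ltn_ord i => lt_in lt_an.
apply/imsetP/idP => [[j _ ->]|i_range].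
  have := ltn_ord j; rewrite val_vshift => lt_jt.
  by rewrite modn_lt_double; [case: ifP | ]; lia.
have lt_jt : (if a <= i then i - a else i + n - a) < t by case: ifP; lia.
exists (Ordinal lt_jt) => //; apply: ord_inj; rewrite val_vshift /=.
by rewrite modn_lt_double; case: ifP => //=; try case: ifP; lia.
Qed.

Definition boundary_path m (B : {set {set 'I_(2 * m)}}) :=
  exists (a : 'I_(2 * m)) (t : nat),
    [/\ 2 <= t, t <= m & bidx B = [set vshift a j | j : 'I_t]].

Lemma boundary_path_rot m s (B : {set {set 'I_(2 * m)}}) :
  boundary_path (edge_map (@vshift (2 * m) ^~ s) B) -> boundary_path B.
Proof.
case=> a [t [t_ge2 t_le_m bidx_eq]]; exists (vshift a (s * (2 * m) - s)), t; split=> //.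
apply: (imset_inj (@vshift_inj _ s)); rewrite -bidx_edge_map_vshift bidx_eq -imset_comp.
by apply: eq_imset => j /=; rewrite vshiftD addnC -vshiftD vshiftKV.
Qed.

Lemma double_ord_subproof m (i : 'I_m) : 2 * i < 2 * m.
Proof. by rewrite ltn_pmul2l. Qed.

Definition double_ord m (i : 'I_m) : 'I_(2 * m) := Ordinal (double_ord_subproof i).

Lemma val_double_ord m (i : 'I_m) : (double_ord i : nat) = 2 * i. Proof. by []. Qed.

Lemma is_SPM_even_bedges m : is_SPM [set bedge (double_ord i) | i : 'I_m].
Proof.
have val_ordS_double (i : 'I_m) : (ordS (double_ord i) : nat) = (2 * i).+1.
  by apply: val_ordS_lt; have := ltn_ord i; rewrite /=; lia.
have neq_double (i : 'I_m) : double_ord i != ordS (double_ord i).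
  by rewrite eq_ord val_ordS_double /=; lia.
apply/and3P; split.
- by apply/forall_inP => _ /imsetP[i _ ->]; rewrite /is_edge cards2 neq_double.
- rewrite card_imset ?card_ord // => i j eq_ij; apply: ord_inj.
  have : double_ord i \in bedge (double_ord j) by rewrite -eq_ij !inE eqxx.
  by case/set2P => /(congr1 (@nat_of_ord _)); rewrite ?val_ordS_double /=; lia.
- apply/forall_inP => _ /imsetP[i _ ->]; apply/forall_inP => _ /imsetP[j _ ->].
  apply/implyP => neq_ij; have {neq_ij} : i != j by apply: contraNneq neq_ij => ->.
  rewrite edges_disjoint_set2 ?neq_double // !eq_ord !val_ordS_double /crossn.
  by rewrite /strict_between /=; lia.
Qed.

Lemma bidx_neq0 m (B : {set {set 'I_(2 * m)}}) : is_blocking_set B -> bidx B != set0.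
Proof.
case=> _ /(_ _ (is_SPM_even_bedges m))[e eB /imsetP[i _ e_eq]].
by apply/set0Pn; exists (double_ord i); rewrite inE -e_eq.
Qed.

Lemma exists_run_end n (S : {set 'I_n}) : S != set0 -> S != setT ->
  exists2 i, i \in S & ordS i \notin S.
Proof.
case/set0Pn=> i0 i0S S_neqT; apply/exists_inP; apply: contraR S_neqT => /exists_inPn run.
have vshift_in s : vshift i0 s \in S.
  by elim: s => [|s IHs]; [exact: i0S | rewrite vshiftS; exact: negbNE (run _ IHs)].
apply/eqP/setP => j; rewrite inE; have [s <-] := vshift_onto i0 j; exact: vshift_in.
Qed.

Definition meets_bedge n (e : {set 'I_n}) (u : 'I_n) := (u \in e) || (ordS u \in e).

Lemma meets_bedge_ordSr n (i : 'I_n) : meets_bedge (bedge i) (ordS i).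
Proof. by rewrite /meets_bedge !inE eqxx orbT. Qed.

Lemma meets_bedge_ordSl n (i : 'I_n) : meets_bedge (bedge (ordS i)) i.
Proof. by rewrite /meets_bedge !inE eqxx orbT. Qed.

(* CK(2k) sits in CK(2k+2) as the polygon without its last two vertices hi1 and hi2. *)
Section DeleteTop.

Variable k : nat.

Lemma leq_double_succ : 2 * k <= 2 * k.+1.
Proof. by rewrite leq_mul2l leqnSn orbT. Qed.

Definition widen2 : 'I_(2 * k) -> 'I_(2 * k.+1) := widen_ord leq_double_succ.

Lemma hi1_subproof : 2 * k < 2 * k.+1. Proof. lia. Qed.
Lemma hi2_subproof : (2 * k).+1 < 2 * k.+1. Proof. lia. Qed.
Definition hi1 : 'I_(2 * k.+1) := Ordinal hi1_subproof.
Definition hi2 : 'I_(2 * k.+1) := Ordinal hi2_subproof.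

Lemma val_hi1 : (hi1 : nat) = 2 * k. Proof. by []. Qed.
Lemma val_hi2 : (hi2 : nat) = (2 * k).+1. Proof. by []. Qed.

Lemma val_widen2 x : (widen2 x : nat) = x. Proof. by []. Qed.

Lemma widen2_inj : injective widen2.
Proof. by move=> x y /(congr1 (@nat_of_ord _)) eq_xy; apply: ord_inj. Qed.

Lemma crossn_widen2 a b c d :
  crossn (widen2 a) (widen2 b) (widen2 c) (widen2 d) = crossn a b c d.
Proof. by []. Qed.

Lemma widen2_onto (y : 'I_(2 * k.+1)) : y != hi1 -> y != hi2 -> exists x, y = widen2 x.
Proof.
rewrite !eq_ord val_hi1 val_hi2 => y_neq1 y_neq2; have lt_y : y < 2 * k by have := ltn_ord y; lia.
by exists (Ordinal lt_y); apply: ord_inj.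
Qed.

Lemma ordS_hi1 : ordS hi1 = hi2.
Proof. by apply/eqP; rewrite eq_ord val_ordS_lt val_hi1 ?val_hi2; lia. Qed.

Lemma edges_disjoint_top (f : {set 'I_(2 * k)}) :
  is_edge f -> edges_disjoint (bedge hi1) (widen2 @: f).
Proof.
case/cards2P=> c [d [cd ->]]; have := ltn_ord c; have := ltn_ord d.
rewrite /bedge ordS_hi1 imsetU1 imset_set1 edges_disjoint_set2 ?(inj_eq widen2_inj) //.
  by rewrite !eq_ord /crossn /strict_between !val_widen2 val_hi1 val_hi2; lia.
by rewrite eq_ord val_hi1 val_hi2; lia.
Qed.

Lemma is_SPM_add_top M : is_SPM M -> is_SPM (bedge hi1 |: edge_map widen2 M).
Proof.
case/and3P=> /forall_inP edgeM /eqP cardM /forall_inP disjM.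
have top_notin : bedge hi1 \notin edge_map widen2 M.
  apply/imsetP => -[e _ /setP/(_ hi1)]; rewrite !inE eqxx => /esym/imsetP[x _].
  by move/(congr1 (@nat_of_ord _)); have := ltn_ord x; rewrite val_widen2 val_hi1; lia.
apply/and3P; split.
- apply/forall_inP => _ /setU1P[->|/imsetP[e eM ->]].
    by apply: is_edge_bedge; lia.
  by rewrite is_edge_imset ?edgeM //; apply: widen2_inj.
- by rewrite cardsU1 top_notin card_edge_map ?cardM //; apply: widen2_inj.
- apply/forall_inP => _ /setU1P[->|/imsetP[e eM ->]];
    apply/forall_inP => _ /setU1P[->|/imsetP[e' e'M ->]]; apply/implyP => neq.
  + by rewrite eqxx in neq.
  + exact/edges_disjoint_top/edgeM.
  + by rewrite /edges_disjoint disjoint_sym /crossing orbC; exact/edges_disjoint_top/edgeM.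
  + rewrite (edges_disjoint_imset widen2_inj crossn_widen2) ?edgeM //.
    by move/forall_inP/(_ e' e'M)/implyP: (disjM e eM); apply; apply: contraNneq neq => ->.
Qed.

Definition restrict (B : {set {set 'I_(2 * k.+1)}}) : {set {set 'I_(2 * k)}} :=
  [set e : {set 'I_(2 * k)} | widen2 @: e \in B].

Lemma blocking_set_restrict (B : {set {set 'I_(2 * k.+1)}}) :
  is_blocking_set B -> bedge hi1 \notin B -> is_blocking_set (restrict B).
Proof.
case=> edgeB blockB top_notin; split.
  by move=> e; rewrite inE => /edgeB; rewrite is_edge_imset //; apply: widen2_inj.
move=> M /is_SPM_add_top /blockB[f fB /setU1P[eq_top|/imsetP[e eM e_eq]]].
  by rewrite -eq_top fB in top_notin.
by exists e; rewrite // inE -e_eq.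
Qed.

Lemma widen2_preimsetK (e : {set 'I_(2 * k.+1)}) :
  hi1 \notin e -> hi2 \notin e -> widen2 @: (widen2 @^-1: e) = e.
Proof.
move=> hi1_notin hi2_notin; apply/setP => y; apply/imsetP/idP => [[x]|ye].
  by rewrite inE => ? ->.
have y_neq1 : y != hi1 by apply: contraNneq hi1_notin => <-.
have y_neq2 : y != hi2 by apply: contraNneq hi2_notin => <-.
have [x y_eq] := widen2_onto y_neq1 y_neq2.
by exists x; rewrite // inE -y_eq.
Qed.

Lemma edge_map_restrict (B : {set {set 'I_(2 * k.+1)}}) :
  edge_map widen2 (restrict B) = [set e in B | ~~ meets_bedge e hi1].
Proof.
apply/setP => e; rewrite inE /meets_bedge ordS_hi1.
apply/imsetP/andP => [[f fB ->]|[eB /norP[n1 n2]]].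
  split; first by rewrite inE in fB.
  by apply/norP; split; apply/imsetP => -[x _ /(congr1 (@nat_of_ord _))];
    have := ltn_ord x; rewrite val_widen2 ?val_hi1 ?val_hi2; lia.
by exists (widen2 @^-1: e); rewrite ?widen2_preimsetK // inE widen2_preimsetK.
Qed.

Lemma card_restrict (B : {set {set 'I_(2 * k.+1)}}) :
  #|B| = #|restrict B| + #|[set e in B | meets_bedge e hi1]|.
Proof.
rewrite -(card_edge_map widen2_inj) edge_map_restrict addnC.
rewrite -(cardsID [set e | meets_bedge e hi1] B).
by congr (_ + _); apply: eq_card => e; rewrite !inE andbC.
Qed.

End DeleteTop.

Lemma edge_map_filter n n' (f : 'I_n -> 'I_n') (E : {set {set 'I_n}}) (P : pred {set 'I_n'}) :
  edge_map f [set e in E | P (f @: e)] = [set e in edge_map f E | P e].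
Proof.
apply/setP => e'; rewrite inE; apply/imsetP/andP => [[e]|[/imsetP[e eE ->] Pe]].
  by rewrite inE => /andP[eE Pe] ->; rewrite imset_f.
by exists e; rewrite ?inE ?eE.
Qed.

Lemma meets_bedge_vshift n s (e : {set 'I_n}) u :
  meets_bedge (@vshift n ^~ s @: e) (vshift u s) = meets_bedge e u.
Proof. by rewrite /meets_bedge -vshift_ordS !mem_imset //; apply: vshift_inj. Qed.

(* Rotate the gap [u, u+1] to [hi1, hi2] and delete its endpoints. *)
Lemma blocking_set_delete_gap k (B : {set {set 'I_(2 * k.+1)}}) (u : 'I_(2 * k.+1)) :
  is_blocking_set B -> bedge u \notin B ->
  exists2 B' : {set {set 'I_(2 * k)}}, is_blocking_set B' &
    #|B| = #|B'| + #|[set e in B | meets_bedge e u]|.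
Proof.
move=> blockB u_notin; have [s us] := vshift_onto u (hi1 k).
have vshift_s_inj := @vshift_inj (2 * k.+1) s.
exists (restrict (edge_map (@vshift _ ^~ s) B)).
  apply: blocking_set_restrict; first exact: blocking_set_rot.
  by rewrite -us -bedge_vshift mem_edge_map.
rewrite -(card_edge_map vshift_s_inj B) card_restrict -us -edge_map_filter card_edge_map //.
by congr (_ + _); apply: eq_card => e; rewrite !inE meets_bedge_vshift.
Qed.

Lemma blocking_set_card_ge k (B : {set {set 'I_(2 * k)}}) : is_blocking_set B -> k <= #|B|.
Proof.
elim: k B => [//|k IHk] B blockB.
have /set0Pn[i iS] := bidx_neq0 blockB.
have B_gt0 : 0 < #|B| by apply/card_gt0P; exists (bedge i); rewrite inE in iS.
have [S_full|S_nfull] := eqVneq (bidx B) setT.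
  by have := card_bidx B; rewrite S_full cardsT card_ord; lia.
have [j jS Sj_notin] := exists_run_end (bidx_neq0 blockB) S_nfull.
rewrite !inE in jS Sj_notin; have [B' blockB' ->] := blocking_set_delete_gap blockB Sj_notin.
have : 0 < #|[set e in B | meets_bedge e (ordS j)]|.
  by apply/card_gt0P; exists (bedge j); rewrite !inE jS meets_bedge_ordSr.
by have := IHk B' blockB'; lia.
Qed.

Lemma card_meets_gap_le1 k (B : {set {set 'I_(2 * k.+1)}}) (u : 'I_(2 * k.+1)) :
  is_blocker B -> bedge u \notin B -> #|[set e in B | meets_bedge e u]| <= 1.
Proof.
case=> blockB cardB u_notin.
have [B' /blocking_set_card_ge] := blocking_set_delete_gap blockB u_notin.
by rewrite cardB; lia.
Qed.

(* A run end in normal position: [lo k, hi1 k] = [2k-1, 2k]. *)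
Lemma lo_subproof k : (2 * k).-1 < 2 * k.+1. Proof. lia. Qed.
Definition lo k : 'I_(2 * k.+1) := Ordinal (lo_subproof k).

Lemma val_lo k : (lo k : nat) = (2 * k).-1. Proof. by []. Qed.

Lemma ordS_lo k : 0 < k -> ordS (lo k) = hi1 k.
Proof. by move=> k_gt0; apply/eqP; rewrite eq_ord val_ordS_lt val_lo ?val_hi1; lia. Qed.

Lemma val_ordS_hi2 k : (ordS (hi2 k) : nat) = 0.
Proof. by rewrite val_ordS_last // val_hi2; lia. Qed.

Section Restrict.

Variables (k : nat) (B : {set {set 'I_(2 * k.+1)}}).

Lemma mem_bidx_restrict (j : 'I_(2 * k)) :
  j.+1 < 2 * k -> (j \in bidx (restrict B)) = (widen2 j \in bidx B).
Proof.
move=> lt_j; rewrite !inE /bedge imsetU1 imset_set1; congr ([set _; _] \in B).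
by apply: ord_inj; rewrite val_widen2 !val_ordS_lt ?val_widen2 //; lia.
Qed.

(* [2k-1, 0] is a boundary edge of CK(2k) but a diagonal of CK(2k+2). *)
Lemma mem_bidx_restrict_last (j : 'I_(2 * k)) :
  j.+1 = 2 * k -> (j \in bidx (restrict B)) = ([set widen2 j; ordS (hi2 k)] \in B).
Proof.
move=> eq_j; rewrite !inE /bedge imsetU1 imset_set1; congr ([set _; _] \in B).
by apply: ord_inj; rewrite val_widen2 val_ordS_hi2 val_ordS_last.
Qed.

End Restrict.

Lemma blocker_meets_gap_eq k (B : {set {set 'I_(2 * k.+1)}}) u f e :
  is_blocker B -> bedge u \notin B -> f \in B -> meets_bedge f u ->
  e \in B -> meets_bedge e u -> e = f.
Proof.
move=> blockerB u_notin fB f_meets eB e_meets.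
by apply: (card_le1_eqP (card_meets_gap_le1 blockerB u_notin)); rewrite inE ?eB ?fB.
Qed.

Definition long_run_end n (S : {set 'I_n}) (r : 'I_n) :=
  [&& ord_pred r \in S, r \in S & ordS r \notin S].

Section RunEnd.

Variables (k : nat) (B : {set {set 'I_(2 * k.+1)}}).
Hypotheses (k_gt0 : 0 < k) (blockerB : is_blocker B).
Hypotheses (lo_in : lo k \in bidx B) (hi1_notin : hi1 k \notin bidx B).

Lemma meets_hi1_eq e : e \in B -> meets_bedge e (hi1 k) -> e = bedge (lo k).
Proof.
move=> eB e_meets; have hi1B : bedge (hi1 k) \notin B by have := hi1_notin; rewrite inE.
have loB : bedge (lo k) \in B by have := lo_in; rewrite inE.
apply: (blocker_meets_gap_eq blockerB hi1B loB _ eB e_meets).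
by rewrite -ordS_lo // meets_bedge_ordSr.
Qed.

Lemma hi2_notin_bidx : hi2 k \notin bidx B.
Proof.
have n_gt2 : 2 < 2 * k.+1 by lia.
rewrite inE; apply/negP => /meets_hi1_eq; rewrite -ordS_hi1 meets_bedge_ordSl => /(_ isT).
by move/(bedge_inj n_gt2)/(congr1 (@nat_of_ord _)); rewrite ordS_hi1 val_lo val_hi2; lia.
Qed.

Lemma is_blocker_restrict : is_blocker (restrict B).
Proof.
case: blockerB => blockB cardB; split.
  by apply: blocking_set_restrict => //; have := hi1_notin; rewrite inE.
have meets_eq : [set e in B | meets_bedge e (hi1 k)] = [set bedge (lo k)].
  apply/setP => e; rewrite !inE; apply/andP/eqP => [[]|->]; first exact: meets_hi1_eq.
  by split; [have := lo_in; rewrite inE | rewrite -ordS_lo // meets_bedge_ordSr].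
by have := card_restrict B; rewrite meets_eq cards1 cardB; lia.
Qed.

Lemma ordS_hi2_notin_bidx :
  1 < k -> [set lo k; ordS (hi2 k)] \in B -> ordS (hi2 k) \notin bidx B.
Proof.
move=> k_gt1 loz_in; have hi2B : bedge (hi2 k) \notin B.
  by have := hi2_notin_bidx; rewrite inE.
have meets_loz : meets_bedge [set lo k; ordS (hi2 k)] (hi2 k).
  by rewrite /meets_bedge !inE eqxx ?orbT.
rewrite inE; apply/negP => zB.
have := blocker_meets_gap_eq blockerB hi2B zB (meets_bedge_ordSl _) loz_in meets_loz.
move/setP/(_ (lo k)); rewrite !inE eqxx /= => /esym; case/orP => /eqP lo_eq.
  by have := congr1 (@nat_of_ord _) lo_eq; rewrite val_ordS_hi2 val_lo; lia.
have := congr1 (@nat_of_ord _) lo_eq.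
by rewrite val_ordS_lt val_ordS_hi2 ?val_lo; lia.
Qed.

Lemma mem_bidx_run_end (a : 'I_(2 * k)) t :
  t <= 2 * k -> bidx (restrict B) = [set vshift a j | j : 'I_t] ->
  forall i : 'I_(2 * k.+1), (i \in bidx B) =
    if i < (2 * k).-1 then (a <= i < a + t) || (i + 2 * k < a + t)
    else i == (2 * k).-1 :> nat.
Proof.
move=> le_t2k restrict_eq i; have lt_i := ltn_ord i; case: ifP => lt_i_lo.
  have lt_i' : i < 2 * k by lia.
  have -> : i = widen2 (Ordinal lt_i') by apply: ord_inj.
  by rewrite -mem_bidx_restrict /= ?restrict_eq ?mem_vshift_range //; lia.
have [->|->|->] : [\/ i = lo k, i = hi1 k | i = hi2 k].
  by case: (ltngtP i (2 * k)) => ?; [apply: Or31 | apply: Or33 | apply: Or32];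
    apply: ord_inj; rewrite ?val_lo ?val_hi1 ?val_hi2; lia.
- by rewrite lo_in val_lo eqxx.
- by rewrite (negbTE hi1_notin) val_hi1; lia.
- by rewrite (negbTE hi2_notin_bidx) val_hi2; lia.
Qed.

(* Below [lo k] the boundary edges of B and of [restrict B] agree. So either the path of
   [restrict B] ends at index 2k-2 or 2k-1 and the boundary edges of B form a path
   ending with [lo k], or it ends earlier and [lo k] is an isolated boundary edge. *)
Lemma boundary_path_or_long_run_end :
  1 < k -> (forall B' : {set {set 'I_(2 * k)}}, is_blocker B' -> boundary_path B') ->
  boundary_path B \/
  (ord_pred (lo k) \notin bidx B /\ exists r, long_run_end (bidx B) r).
Proof.
move=> k_gt1 IH; have [a [t [t_ge2 t_le_k restrict_eq]]] := IH _ is_blocker_restrict.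
have a_lt := ltn_ord a; have t_le : t <= 2 * k by lia.
have memS := mem_bidx_run_end t_le restrict_eq.
have lo'_lt : (2 * k).-1 < 2 * k by lia.
have lo'_last : (Ordinal lo'_lt).+1 = 2 * k by rewrite /=; lia.
have := mem_bidx_restrict_last B lo'_last.
have -> : widen2 (Ordinal lo'_lt) = lo k by apply: ord_inj.
rewrite restrict_eq mem_vshift_range //= => lo'_in.
case: (boolP ([set lo k; ordS (hi2 k)] \in B)) => [loz_in|loz_notin].
  move: (ordS_hi2_notin_bidx k_gt1 loz_in) lo'_in.
  rewrite memS val_ordS_hi2 ifT ?loz_in; try lia => z_notin lo'_in.
  have a'_lt : 2 * k - t < 2 * k.+1 by lia.
  left; exists (Ordinal a'_lt), t; split=> //; first lia.
  by apply/setP => i; rewrite memS mem_vshift_range /=; [case: ifP|]; lia.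
rewrite (negbTE loz_notin) in lo'_in.
case: (a + t =P (2 * k).-1) => [at_eq|at_neq].
  left; exists (widen2 a), t.+1; split=> //; first lia.
  by apply/setP => i; rewrite memS mem_vshift_range ?val_widen2; [case: ifP|]; lia.
right; split.
  by rewrite memS val_ord_pred val_lo; [case: ifP|]; lia.
have r_lt : a + t - 1 < 2 * k.+1 by lia.
exists (Ordinal r_lt); rewrite /long_run_end !memS val_ord_pred ?val_ordS_lt /=; try lia.
by case: ifP; case: ifP; case: ifP; lia.
Qed.

End RunEnd.

Lemma boundary_path_base (B : {set {set 'I_(2 * 2)}}) :
  is_blocker B -> lo 1 \in bidx B -> hi1 1 \notin bidx B -> boundary_path B.
Proof.
case=> blockB cardB lo_in hi1_notin.
have [e eB /imsetP[i _ e_eq]] := proj2 blockB _ (is_SPM_even_bedges 2).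
have z_in : double_ord i \in bidx B by rewrite inE -e_eq.
have z_val : (double_ord i : nat) = 0.
  apply: contraNeq hi1_notin => z_neq0.
  suff -> : hi1 1 = double_ord i by [].
  by apply: ord_inj; move: z_neq0; have := ltn_ord i; rewrite val_hi1 val_double_ord; lia.
have S_lo_le1 : #|bidx B :\ lo 1| <= 1.
  by have := card_bidx B isT; rewrite (cardsD1 (lo 1)) lo_in cardB add1n ltnS.
exists (double_ord i), 2; split=> //; apply/setP => x; rewrite mem_vshift_range // z_val.
apply/idP/idP => [x_in|x_range].
  case: (x =P lo 1) => [->|/eqP x_neq]; first by rewrite val_lo.
  have x_in' : x \in bidx B :\ lo 1 by rewrite in_setD1 x_neq x_in.
  have z_in' : double_ord i \in bidx B :\ lo 1.
    by rewrite in_setD1 z_in andbT eq_ord z_val val_lo.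
  by rewrite -(card_le1_eqP S_lo_le1 _ _ x_in' z_in') z_val.
have [->|->] : x = double_ord i \/ x = lo 1.
  by case: (ltngtP x 1) => ?; [left | lia | right]; apply: ord_inj; rewrite ?z_val ?val_lo; lia.
- exact: z_in.
- exact: lo_in.
Qed.

Lemma blocker_run_end_cases k (B : {set {set 'I_(2 * k.+1)}}) (i : 'I_(2 * k.+1)) :
  0 < k -> (1 < k -> forall B' : {set {set 'I_(2 * k)}}, is_blocker B' -> boundary_path B') ->
  is_blocker B -> i \in bidx B -> ordS i \notin bidx B ->
  boundary_path B \/ (ord_pred i \notin bidx B /\ exists r, long_run_end (bidx B) r).
Proof.
move=> k_gt0 IH blockerB iS Si_notin; have [s is_lo] := vshift_onto i (lo k).
have blockerBs := blocker_rot s blockerB.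
have memBs x := mem_bidx_edge_map_vshift s B x.
have lo_in : lo k \in bidx (edge_map (@vshift _ ^~ s) B) by rewrite -is_lo memBs.
have hi1_notin : hi1 k \notin bidx (edge_map (@vshift _ ^~ s) B).
  by rewrite -ordS_lo // -is_lo -vshift_ordS memBs.
have [k_eq1|k_gt1] : k = 1 \/ 1 < k by lia.
  by subst k; left; apply: (boundary_path_rot (s := s)); apply: boundary_path_base.
case: (boundary_path_or_long_run_end k_gt0 blockerBs lo_in hi1_notin k_gt1 (IH k_gt1)).
  by move/boundary_path_rot; left.
case=> pred_notin [r r_end]; right; split; first by rewrite -memBs vshift_ord_pred is_lo.
have [r0 r_eq] : exists r0, r = vshift r0 s.
  by exists (vshift r (s * (2 * k.+1) - s)); rewrite vshiftKV.
by move: r_end; rewrite r_eq /long_run_end -vshift_ord_pred -vshift_ordS !memBs; exists r0.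
Qed.

Lemma blocker_boundary_path m (B : {set {set 'I_(2 * m)}}) :
  2 <= m -> is_blocker B -> boundary_path B.
Proof.
elim: m B => // k IHk B k_ge1 blockerB.
have k_gt0 : 0 < k by lia.
have S_neq0 := bidx_neq0 (proj1 blockerB).
have S_neqT : bidx B != setT.
  apply/eqP => S_full; have := card_bidx B.
  by rewrite S_full cardsT card_ord (proj2 blockerB); lia.
have [i iS Si_notin] := exists_run_end S_neq0 S_neqT.
have IH : 1 < k -> forall B' : {set {set 'I_(2 * k)}}, is_blocker B' -> boundary_path B'.
  by move=> k_gt1 B'; apply: IHk.
case: (blocker_run_end_cases k_gt0 IH blockerB iS Si_notin) => [//|[_ [r]]].
case/and3P=> pred_r_in r_in Sr_notin.
case: (blocker_run_end_cases k_gt0 IH blockerB r_in Sr_notin) => [//|[pred_r_notin _]].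
by rewrite pred_r_in in pred_r_notin.
Qed.

Theorem lemma3p2 (m : nat) (B : {set {set 'I_(2 * m)}}) :
  2 <= m -> is_blocker B ->
  exists (a : 'I_(2 * m)) (t : nat),
    [/\ 2 <= t, t <= m &
        [set e in B | is_boundary e] = [set bedge (vshift a k) | k : 'I_t]].
Proof.
move=> m_ge2 blockerB.
have [a [t [t_ge2 t_le_m bidx_eq]]] := blocker_boundary_path m_ge2 blockerB.
by exists a, t; split; rewrite // boundary_edges_bidx bidx_eq -imset_comp.
Qed.
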